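(* Let $D_V=\mathbb{C}[w_0,\dots,w_s]\langle\partial_{w_0},\dots,\partial_{w_s}\rangle$ and let $I\subset D_V$ be a left ideal that can be generated by finitely many elements of pure order. Put $M=D_V/I$. Then for all $k\in\mathbb{Z}$ and $p$, the natural map $$V^kD_V\cap F_pD_V\longrightarrow V^k_{ind}M\cap F^{ord}_pM$$ is surjective.
   Context: $F_\bullet D_V$ is the order filtration. $V^\bullet D_V$ is the $V$-filtration along $w_0=0$: $V^0D_V$ is spanned by the monomials $w^\gamma\partial_w^\delta$ with $\gamma_0\geq\delta_0$, $V^kD_V=w_0^kV^0D_V$ and $V^{-k}D_V=\sum_{j\ge0,\,j\le k}\partial_{w_0}^jV^0D_V$ for $k>0$ (so $V^kD_V$ is spanned by monomials with $\gamma_0-\delta_0\ge k$). $V^k_{ind}M=(V^kD_V+I)/I$, $F^{ord}_pM=(F_pD_V+I)/I$. An element $P=\sum c_{\gamma\delta}w^\gamma\partial_w^\delta$ (standard form) is of pure order $k$ if every monomial with $c_{\gamma\delta}\ne0$ lies in $V^kD_V$ and has nonzero class in $V^kD_V/V^{k+1}D_V$, i.e. $\gamma_0-\delta_0=k$ for all its monomials. *)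

(* Weyl algebra D_V over C = R[i] (R : realType), realised
   as its faithful action on the polynomial ring C[w_0..w_s]. *)
From mathcomp Require Import all_boot all_algebra.
From mathcomp Require Import reals.
From mathcomp.real_closed Require Import complex.
From mathcomp Require Import mpoly.

Set Implicit Arguments.
Unset Strict Implicit.
Unset Printing Implicit Defensive.
Import GRing.Theory.
Local Open Scope ring_scope.

Section Weyl.
Variables (R : realType) (s : nat).

(* C[w_0, ..., w_s] : s+1 variables, w_0 is index ord0 *)
Definition wpoly := {mpoly R[i][s.+1]}.
(* linear operators on C[w]; D_V is a subring of these, product = composition *)
Definition wop := wpoly -> wpoly.
Definition wmon := 'X_{1..s.+1}.

Definition mon (gamma delta : wmon) : wop := fun f => 'X_[gamma] * f^`M[delta].

Definition lincomb (c : seq (R[i] * (wmon * wmon))) : wop :=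
  fun f => \sum_(t <- c) t.1 *: mon t.2.1 t.2.2 f.

Definition spanned_by (ok : wmon -> wmon -> bool) (P : wop) : Prop :=
  exists c : seq (R[i] * (wmon * wmon)),
    all (fun t => ok t.2.1 t.2.2) c /\ forall f, P f = lincomb c f.

Definition inD (P : wop) : Prop := spanned_by (fun _ _ => true) P.

Definition inV (k : int) (P : wop) : Prop :=
  spanned_by (fun gamma delta => k <= (gamma ord0)%:Z - (delta ord0)%:Z) P.

Definition inF (p : nat) (P : wop) : Prop :=
  spanned_by (fun _ delta => (mdeg delta <= p)%N) P.

Definition pure_order (k : int) (P : wop) : Prop :=
  spanned_by (fun gamma delta => (gamma ord0)%:Z - (delta ord0)%:Z == k) P.

Definition opsub (P Q : wop) : wop := fun f => P f - Q f.

Definition in_left_ideal (m : nat) (G : 'I_m -> wop) (P : wop) : Prop :=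
  exists Q : 'I_m -> wop, (forall j, inD (Q j)) /\
    forall f, P f = \sum_(j < m) Q j (G j f).

(* For M = D_V / I, the class [X] of X in D_V lies in
   V^k_ind M = (V^k D_V + I)/I, resp. F^ord_p M = (F_p D_V + I)/I *)
Definition in_Vind (m : nat) (G : 'I_m -> wop) (k : int) (X : wop) : Prop :=
  exists A, inV k A /\ in_left_ideal G (opsub X A).

Definition in_Ford (m : nat) (G : 'I_m -> wop) (p : nat) (X : wop) : Prop :=
  exists B, inF p B /\ in_left_ideal G (opsub X B).

End Weyl.

(* Write the class of X both as [A] with A in V^k D_V and as [B] with B in
   F_p D_V, so that B - A lies in I.  Let vlow k Y be the part of an operator
   Y of V-order < k.  Since each generator G_j has pure order e_j,
   vlow k (Q G_j) = vlow (k - e_j) Q G_j, so vlow k maps I into itself.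
   Hence the low part vlow k B = vlow k (B - A) of B lies in I, and the high
   part of B, which lies in V^k D_V and F_p D_V, has the same class as X. *)

From HB Require Import structures.
From mathcomp Require Import all_boot all_order all_algebra.
From mathcomp Require Import reals.
From mathcomp.real_closed Require Import complex.
From Stdlib Require Import IndefiniteDescription.
From mathcomp Require Import bigenough ssrcomplements mpoly zify.

Set Implicit Arguments.
Unset Strict Implicit.
Unset Printing Implicit Defensive.
Import Order.TTheory GRing.Theory.
Local Open Scope ring_scope.

Section MonomialMaps.
Variables (K : nzRingType) (n : nat).
Local Notation P := {mpoly K[n]}.
Local Notation M := 'X_{1..n}.
Import BigEnough.

Definition mrestr (pr : pred M) (f : P) : P :=
  \sum_(m <- msupp f | pr m) f@_m *: 'X_[m].

Lemma mcoeff_mrestr pr f m : (mrestr pr f)@_m = if pr m then f@_m else 0.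
Proof.
rewrite /mrestr raddf_sum /= big_mkcond /=.
under eq_bigr => m' _ do rewrite mcoeffZ mcoeffX.
have [fm|fNm] := boolP (m \in msupp f).
  rewrite (bigD1_seq m) ?msupp_uniq //= eqxx mulr1 big1 ?addr0 //.
  by move=> m' /negbTE ->; rewrite mulr_natr mulr0n if_same.
rewrite (memN_msupp_eq0 fNm) if_same big1 // => m' _.
by case: eqVneq => [->|_];
  rewrite ?(memN_msupp_eq0 fNm) ?mul0r ?mulr_natr ?mulr0n if_same.
Qed.

Lemma mrestr_is_linear pr : linear (mrestr pr).
Proof.
move=> a f g; apply/mpolyP => m.
rewrite mcoeffD mcoeffZ !mcoeff_mrestr mcoeffD mcoeffZ.
by case: (pr m); rewrite ?mulr0 ?addr0.
Qed.

HB.instance Definition _ pr :=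
  GRing.isLinear.Build K P P *:%R (mrestr pr) (mrestr_is_linear pr).

Lemma mrestr_id (pr : pred M) (f : P) :
  {in msupp f, forall m, pr m} -> mrestr pr f = f.
Proof.
move=> prf; apply/mpolyP => m; rewrite mcoeff_mrestr.
by case: (boolP (m \in msupp f)) => [/prf ->|/memN_msupp_eq0 ->]; rewrite ?if_same.
Qed.

Lemma mrestr_eq0 (pr : pred M) (f : P) :
  {in msupp f, forall m, ~~ pr m} -> mrestr pr f = 0.
Proof.
move=> prf; apply/mpolyP => m; rewrite mcoeff_mrestr mcoeff0.
by case: (boolP (m \in msupp f)) => [/prf /negbTE ->|/memN_msupp_eq0 ->]; rewrite ?if_same.
Qed.

Definition linext (F : M -> P) (f : P) : P := \sum_(m <- msupp f) f@_m *: F m.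

Lemma linextwE F k f :
  (msize f <= k)%N -> linext F f = \sum_(m : 'X_{1..n < k}) f@_m *: F m.
Proof.
move=> fk; rewrite /linext (big_mksub 'X_{1..n < k}) ?msupp_uniq //=.
  by rewrite big_rmcond //= => m /memN_msupp_eq0 ->; rewrite scale0r.
by move=> m /msize_mdeg_lt /leq_trans; apply.
Qed.

Lemma linext_is_linear F : linear (linext F).
Proof.
move=> a f g; pose_big_enough k.
  rewrite !(linextwE F (k := k)) // scaler_sumr -big_split /=.
  by apply: eq_bigr => m _; rewrite mcoeffD mcoeffZ scalerDl scalerA.
by close.
Qed.

HB.instance Definition _ F :=
  GRing.isLinear.Build K P P *:%R (linext F) (linext_is_linear F).

Lemma linextX F m : linext F 'X_[m] = F m.
Proof. by rewrite /linext msuppX big_seq1 mcoeffX eqxx scale1r. Qed.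

Lemma linear_linextE (L : {linear P -> P}) : L =1 linext (fun m => L 'X_[m]).
Proof.
by move=> f; rewrite {1}(mpolyE f) linear_sum; apply: eq_bigr => m _; rewrite linearZ.
Qed.

Lemma eq_linear_monomial (L1 L2 : {linear P -> P}) :
  (forall m, L1 'X_[m] = L2 'X_[m]) -> L1 =1 L2.
Proof.
move=> eqL f; rewrite linear_linextE [RHS]linear_linextE.
by apply: eq_bigr => m _; rewrite eqL.
Qed.

End MonomialMaps.

Section WeylAlgebra.
Variables (R : realType) (s : nat).
Local Notation P := {mpoly R[i][s.+1]}.
Local Notation M := (wmon s).
Local Notation mon := (@mon R s).
Local Notation term := (R[i] * (M * M))%type.

Definition vord (t : term) : int := (t.2.1 ord0)%:Z - (t.2.2 ord0)%:Z.

Lemma mon_is_linear (g d : M) : linear (mon g d).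
Proof. by move=> a f h; rewrite /mon linearP mulrDr scalerAr. Qed.

HB.instance Definition _ g d :=
  GRing.isLinear.Build R[i] P P *:%R (mon g d) (mon_is_linear g d).

Lemma lincomb_is_linear (c : seq term) : linear (lincomb c).
Proof.
move=> a f h; rewrite /lincomb scaler_sumr -big_split /=.
by apply: eq_bigr => t _; rewrite linearP scalerDr !scalerA mulrC.
Qed.

HB.instance Definition _ c :=
  GRing.isLinear.Build R[i] P P *:%R (lincomb c) (lincomb_is_linear c).

Lemma lincomb_split (pr : pred term) c f :
  lincomb c f = lincomb [seq t <- c | pr t] f + lincomb [seq t <- c | ~~ pr t] f.
Proof. by rewrite /lincomb !big_filter (bigID pr). Qed.

Definition shifts_w0 (e : int) (Y : wop R s) :=
  forall m m', m' \in msupp (Y 'X_[m]) -> (m' ord0)%:Z = (m ord0)%:Z + e.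

Lemma mon_shift (g d : M) : shifts_w0 ((g ord0)%:Z - (d ord0)%:Z) (mon g d).
Proof.
move=> m m'; rewrite /mon mderivmX -scalerAr -mpolyXD.
have [dm|md] := leqP (d ord0) (m ord0).
  by move/msuppZ_le; rewrite msuppX inE => /eqP ->; rewrite mnmDE mnmBE; lia.
by rewrite (bigD1 ord0) //= ffact_small // mul0n scale0r msupp0.
Qed.

Lemma lincomb_shift e c : all (fun t => vord t == e) c -> shifts_w0 e (lincomb c).
Proof.
move=> /allP ce m m' /msupp_sum_le /flatten_mapP [t].
rewrite mem_filter => /andP[_ /ce /eqP <-] /msuppZ_le.
exact: mon_shift.
Qed.

Definition lowpart (b : int) : {linear P -> P} :=
  mrestr (fun m : M => (m ord0)%:Z < b).

Lemma lowpart_shift e Y : shifts_w0 e Y -> forall (k : int) (m : M),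
  lowpart ((m ord0)%:Z + k) (Y 'X_[m]) = if k <= e then 0 else Y 'X_[m].
Proof.
move=> Ye k m; case: ifP => ke; [apply: mrestr_eq0 | apply: mrestr_id].
  by move=> m' /Ye ->; lia.
by move=> m' /Ye ->; lia.
Qed.

(* Read off from the action on monomials, so that it does not depend on how
   Y is written as a combination of standard monomials. *)
Definition vlow (k : int) (Y : wop R s) : wop R s :=
  linext (fun m : M => lowpart ((m ord0)%:Z + k) (Y 'X_[m])).

HB.instance Definition _ k Y := GRing.Linear.on (vlow k Y).

Lemma vlow_ext k Y Y' : Y =1 Y' -> vlow k Y =1 vlow k Y'.
Proof. by move=> eqY f; apply: eq_bigr => m _; rewrite eqY. Qed.

Lemma vlowX k Y m : vlow k Y 'X_[m] = lowpart ((m ord0)%:Z + k) (Y 'X_[m]).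
Proof. exact: linextX. Qed.

Lemma vlow_lincomb k c : vlow k (lincomb c) =1 lincomb [seq t <- c | vord t < k].
Proof.
apply: eq_linear_monomial => m /=.
rewrite vlowX /lincomb linear_sum big_filter [RHS]big_mkcond.
apply: eq_bigr => t _; rewrite linearZ_LR (lowpart_shift (@mon_shift _ _)) /vord.
by case: leP; rewrite ?scaler0.
Qed.

Lemma vlow_eq0 k Y : inV k Y -> vlow k Y =1 (fun _ => 0).
Proof.
move=> [c [ck Yc]] f; rewrite (vlow_ext _ Yc) vlow_lincomb /lincomb.
rewrite (eq_in_filter (a2 := pred0)) ?filter_pred0 ?big_nil // => t /(allP ck).
by rewrite /vord ltNge => ->.
Qed.

Lemma vlow_opsub k Y1 Y2 : vlow k (opsub Y1 Y2) =1 opsub (vlow k Y1) (vlow k Y2).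
Proof.
move=> f; rewrite /opsub /vlow /linext -sumrB.
by apply: eq_bigr => m _; rewrite linearB scalerBr.
Qed.

Lemma vlow_sum (I : Type) (r : seq I) (Y : I -> wop R s) k :
  vlow k (fun f => \sum_(i <- r) Y i f) =1 (fun f => \sum_(i <- r) vlow k (Y i) f).
Proof.
move=> f; rewrite /vlow /linext.
under eq_bigr do rewrite [lowpart _ _]linear_sum scaler_sumr.
exact: exchange_big.
Qed.

Lemma vlow_comp (L G0 : {linear P -> P}) e k :
  shifts_w0 e G0 -> vlow k (L \o G0) =1 vlow (k - e) L \o G0.
Proof.
move=> G0e; apply: eq_linear_monomial => m /=; rewrite vlowX /=.
rewrite {1}(mpolyE (G0 'X_[m])) !linear_sum /vlow /linext big_seq [RHS]big_seq.
apply: eq_bigr => m' mm'; rewrite !linearZ /=.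
by rewrite (G0e _ _ mm') -addrA [e + _]addrC subrK.
Qed.

Lemma lincomb_opsub (c1 c2 : seq term) :
  opsub (lincomb c1) (lincomb c2) =1 lincomb (c1 ++ [seq (- t.1, t.2) | t <- c2]).
Proof.
move=> f; rewrite /opsub /lincomb big_cat big_map -sumrN /=.
by congr (_ + _); apply: eq_bigr => t _; rewrite scaleNr.
Qed.

Lemma inD_opsub (Y1 Y2 : wop R s) : inD Y1 -> inD Y2 -> inD (opsub Y1 Y2).
Proof.
move=> [c1 [_ Y1c]] [c2 [_ Y2c]]; exists (c1 ++ [seq (- t.1, t.2) | t <- c2]).
by split=> [|f]; [apply/allP | rewrite -lincomb_opsub /opsub Y1c Y2c].
Qed.

Lemma inD_vlow k (Y : wop R s) : inD Y -> inD (vlow k Y).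
Proof.
move=> [c [_ Yc]]; exists [seq t <- c | vord t < k].
by split=> [|f]; [apply/allP | rewrite (vlow_ext _ Yc) vlow_lincomb].
Qed.

Section LeftIdeal.
Variables (n : nat) (G : 'I_n -> wop R s).

Lemma left_ideal_ext Y Y' : Y =1 Y' -> in_left_ideal G Y -> in_left_ideal G Y'.
Proof. by move=> eqY [Q [QD YQ]]; exists Q; split => // f; rewrite -eqY. Qed.

Lemma left_ideal0 : in_left_ideal G (fun _ => 0).
Proof.
exists (fun _ _ => 0); split=> [j|f]; last by rewrite big1.
by exists [::]; split=> // f; rewrite /lincomb big_nil.
Qed.

Lemma left_ideal_opsub Y1 Y2 :
  in_left_ideal G Y1 -> in_left_ideal G Y2 -> in_left_ideal G (opsub Y1 Y2).
Proof.
move=> [Q1 [Q1D Y1Q]] [Q2 [Q2D Y2Q]]; exists (fun j => opsub (Q1 j) (Q2 j)).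
by split=> [j|f]; [apply: inD_opsub | rewrite /opsub Y1Q Y2Q -sumrB].
Qed.

Lemma left_ideal_vlow k Y : (forall j, exists e, pure_order e (G j)) ->
  in_left_ideal G Y -> in_left_ideal G (vlow k Y).
Proof.
move=> /functional_choice [e Ge] [Q [QD YQ]].
exists (fun j => vlow (k - e j) (Q j)); split=> [j|f]; first exact: inD_vlow.
rewrite (vlow_ext _ YQ) vlow_sum; apply: eq_bigr => j _.
have [cQ [_ Qc]] := QD j; have [cG [cGe Gc]] := Ge j.
have QG : (fun f => Q j (G j f)) =1 lincomb cQ \o lincomb cG.
  by move=> g; rewrite /= -Gc Qc.
rewrite (vlow_ext _ QG) (vlow_comp _ _ (lincomb_shift cGe)) /= -Gc.
exact/esym/vlow_ext.
Qed.

End LeftIdeal.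

End WeylAlgebra.

Theorem lemma2p15 (R : realType) (s m : nat) (G : 'I_m -> wop R s) :
  (forall j, exists kj : int, pure_order kj (G j)) ->
  forall (k : int) (p : nat) (X : wop R s),
    inD X -> in_Vind G k X -> in_Ford G p X ->
    exists P : wop R s,
      inV k P /\ inF p P /\ in_left_ideal G (opsub P X).
Proof.
move=> Gpure k p X _ [A [Ak XA]] [B [[cB [cBp Bc]] XB]].
pose low := [seq t <- cB | vord t < k]; pose high := [seq t <- cB | ~~ (vord t < k)].
have lowI : in_left_ideal G (lincomb low).
  apply: left_ideal_ext (left_ideal_vlow k Gpure (left_ideal_opsub XA XB)) => f.
  rewrite vlow_opsub /opsub !vlow_opsub /opsub (vlow_eq0 Ak) (vlow_ext _ Bc) vlow_lincomb.
  by rewrite subr0 subKr.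
exists (lincomb high); split; [|split].
- by exists high; split=> //; apply/allP => t; rewrite mem_filter -leNgt => /andP[].
- exists high; split=> //; apply/allP => t; rewrite mem_filter => /andP[_].
  exact: (allP cBp).
have XBI := left_ideal_opsub (left_ideal0 G) XB.
apply: left_ideal_ext (left_ideal_opsub XBI lowI) => f.
rewrite /opsub Bc (lincomb_split (fun t => vord t < k)) sub0r opprB.
by rewrite addrAC (addrC (lincomb low f)) addrK.
Qed.
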